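(* Let $\mathrm{M}=\langle e_1+I,\ e_2+I,\ -I\rangle$, where $e_1,e_2$ are the standard basis vectors of $E^2$. Then $\Omega:\mathrm{Aff}(\mathrm{M})\to\mathrm{Out}(\mathrm{M})$ is an isomorphism.
   Context: Affine maps of $E^2$ are written $a+A$ ($x\mapsto a+Ax$); $a+I$ is translation by $a$. For a 2-space group $\mathrm{M}$, let $N_A(\mathrm{M})$ be its normalizer in the affine group of $E^2$. Each $a+A\in N_A(\mathrm{M})$ induces an affinity $(a+A)_\star:\mathrm{M}x\mapsto\mathrm{M}(a+Ax)$ of the flat orbifold $E^2/\mathrm{M}$; $\mathrm{Aff}(\mathrm{M})$ is the group of all such affinities. $\Omega:\mathrm{Aff}(\mathrm{M})\to\mathrm{Out}(\mathrm{M})$ sends $(a+A)_\star$ to the outer automorphism class of the automorphism $g\mapsto (a+A)g(a+A)^{-1}$ of $\mathrm{M}$. *)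

(* the Euclidean plane E^2 is 'cV[R]_2 over R : realType. *)
From HB Require Import structures.
From mathcomp Require Import all_boot all_order all_algebra.
From mathcomp Require Import reals.
Set Implicit Arguments. Unset Strict Implicit. Unset Printing Implicit Defensive.
Import Order.TTheory GRing.Theory Num.Theory.
Local Open Scope ring_scope.

Section Affine.
Variable R : realType.

Record aff := mkAff { atr : 'cV[R]_2; alin : 'M[R]_2 }.

Definition aapp (f : aff) (x : 'cV[R]_2) : 'cV[R]_2 := atr f + alin f *m x.

Definition is_affinity (f : aff) : Prop := alin f \in unitmx.

Definition amul (f g : aff) : aff :=
  mkAff (atr f + alin f *m atr g) (alin f *m alin g).
Definition aid : aff := mkAff 0 1%:M.
Definition ainv (f : aff) : aff :=
  mkAff (- (invmx (alin f) *m atr f)) (invmx (alin f)).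

Definition transl (a : 'cV[R]_2) : aff := mkAff a 1%:M.

(* standard basis vectors e_1, e_2 (indices 0, 1) *)
Definition e (i : 'I_2) : 'cV[R]_2 := \col_j (j == i)%:R.

Inductive gen (S : aff -> Prop) : aff -> Prop :=
  | gen_base g : S g -> gen S g
  | gen_id : gen S aid
  | gen_mul g h : gen S g -> gen S h -> gen S (amul g h)
  | gen_inv g : gen S g -> gen S (ainv g).

Definition Mgrp : aff -> Prop :=
  gen (fun g => g = transl (e 0) \/ g = transl (e 1) \/ g = mkAff 0 (- 1%:M)).

Section Generic.
Variable M : aff -> Prop.

Definition conj_by (phi g : aff) : aff := amul (amul phi g) (ainv phi).

Definition in_normalizer (phi : aff) : Prop :=
  is_affinity phi /\ forall g, M g <-> M (conj_by phi g).

(* the orbit M x, a point of the orbifold E^2/M *)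
Definition orbit (x : 'cV[R]_2) : 'cV[R]_2 -> Prop :=
  fun y => exists2 g, M g & y = aapp g x.

(* phi_* = psi_* as maps of E^2/M : Mx |-> M(phi x) *)
Definition same_induced (phi psi : aff) : Prop :=
  forall x, orbit (aapp phi x) = orbit (aapp psi x).

Definition is_aut (alpha : aff -> aff) : Prop :=
  [/\ forall g, M g -> M (alpha g),
      forall h, M h -> exists2 g, M g & alpha g = h,
      forall g h, M g -> M h -> alpha g = alpha h -> g = h &
      forall g h, M g -> M h -> alpha (amul g h) = amul (alpha g) (alpha h)].

Definition same_outer (alpha beta : aff -> aff) : Prop :=
  exists2 h, M h & forall g, M g -> alpha g = conj_by h (beta g).

End Generic.
End Affine.

From Pilot Require Import Defs.
From HB Require Import structures.
From mathcomp Require Import all_boot all_order all_algebra.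
From mathcomp Require Import reals.
From mathcomp Require Import lra.
From Stdlib Require Import FunctionalExtensionality PropExtensionality.
Set Implicit Arguments. Unset Strict Implicit. Unset Printing Implicit Defensive.
Import Order.TTheory GRing.Theory Num.Theory.
Local Open Scope ring_scope.

(* M is the group of maps x |-> +-x + n with n in Z^2.  Its centralizer in the
   affine group is trivial: commuting with the translations forces the linear
   part to be I, commuting with -I kills the translation part.  So normalizing
   affinities inducing the same outer automorphism differ by an element of M,
   which gives injectivity of Omega.  Well-definedness rests on discreteness: if
   chi x lies in M x for every x, then evaluating at a small multiple of a vector
   v shows that chi moves v to +-v up to an integral vector of norm < 1, hence
   chi has linear part +-I and integral translation part, i.e. chi is in M.
   For surjectivity, an automorphism alpha preserves the involutions (linear
   part -I), so it sends e_i + I to a_i + I and -I to b - I; the affinity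
   b/2 + A, where A has columns a_1, a_2, intertwines alpha on the generators,
   hence on M, and A is invertible because alpha is onto. *)

Lemma intr_norm_lt1 (R : archiNumDomainType) (x : R) :
  x \is a Num.int -> `|x| < 1 -> x = 0.
Proof.
move=> xZ x_small; apply/eqP; apply: contraTT x_small => x_neq0.
by rewrite le_gtF // norm_intr_ge1.
Qed.

Lemma unitmx_of_delta_preimages (F : fieldType) n (A : 'M[F]_n) :
  (forall j, exists u : 'cV_n, A *m u = delta_mx j 0) -> A \in unitmx.
Proof.
move=> A_onto.
have {}A_onto j : exists u : 'cV_n, A *m u == delta_mx j 0.
  by have [u Au] := A_onto j; exists u; apply/eqP.
pose B : 'M_n := \matrix_(i, j) (xchoose (A_onto j)) i 0.
suff AB1 : A *m B = 1%:M by case: (mulmx1_unit AB1).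
apply/matrixP => i j.
have -> : (A *m B) i j = (A *m xchoose (A_onto j)) i 0.
  by rewrite !mxE; apply: eq_bigr => k _; rewrite mxE.
by rewrite (eqP (xchooseP (A_onto j))) !mxE eqxx andbT.
Qed.

Lemma ord2P (j : 'I_2) : j = 0 \/ j = 1.
Proof. by case: j => -[|[|]] // j_lt; [left | right]; apply: val_inj. Qed.

Section AffineGroup.
Variable R : realType.
Implicit Types (f g h phi : aff R) (x : 'cV[R]_2).

Lemma aff_eq f g : atr f = atr g -> alin f = alin g -> f = g.
Proof. by case: f g => [a A] [b B] /= -> ->. Qed.

Lemma amulA f g h : amul (amul f g) h = amul f (amul g h).
Proof. by apply: aff_eq; rewrite /= ?mulmxA // mulmxDr addrA mulmxA. Qed.

Lemma amul_aidl f : amul (aid R) f = f.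
Proof. by apply: aff_eq; rewrite /= ?mul1mx ?add0r. Qed.

Lemma amul_aidr f : amul f (aid R) = f.
Proof. by apply: aff_eq; rewrite /= ?mulmx0 ?addr0 ?mulmx1. Qed.

Lemma amul_ainvr f : is_affinity f -> amul f (ainv f) = aid R.
Proof.
move=> uf; apply: aff_eq; rewrite /= ?mulmxV //.
by rewrite mulmxN mulmxA mulmxV // mul1mx subrr.
Qed.

Lemma amul_ainvl f : is_affinity f -> amul (ainv f) f = aid R.
Proof. by move=> uf; apply: aff_eq; rewrite /= ?mulVmx // addNr. Qed.

Lemma aid_affinity : is_affinity (aid R).
Proof. exact: unitmx1. Qed.

Lemma amul_affinity f g : is_affinity f -> is_affinity g -> is_affinity (amul f g).
Proof. by move=> uf ug; rewrite /is_affinity unitmx_mul uf ug. Qed.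

Lemma ainv_affinity f : is_affinity f -> is_affinity (ainv f).
Proof. by move=> uf; rewrite /is_affinity unitmx_inv. Qed.

Lemma amulK f g : is_affinity f -> amul (ainv f) (amul f g) = g.
Proof. by move=> uf; rewrite -amulA amul_ainvl // amul_aidl. Qed.

Lemma amulKV f g : is_affinity f -> amul f (amul (ainv f) g) = g.
Proof. by move=> uf; rewrite -amulA amul_ainvr // amul_aidl. Qed.

Lemma ainv_unique f g : is_affinity f -> amul g f = aid R -> g = ainv f.
Proof. by move=> uf gf1; rewrite -[g]amul_aidr -(amul_ainvr uf) -amulA gf1 amul_aidl. Qed.

Lemma ainvK f : is_affinity f -> ainv (ainv f) = f.
Proof. by move=> uf; apply/esym/ainv_unique; [exact: ainv_affinity | exact: amul_ainvr]. Qed.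

Lemma ainvM f g : is_affinity f -> is_affinity g ->
  ainv (amul f g) = amul (ainv g) (ainv f).
Proof.
move=> uf ug; apply/esym/ainv_unique; first exact: amul_affinity.
by rewrite amulA amulK // amul_ainvl.
Qed.

Lemma aapp_amul f g x : aapp (amul f g) x = aapp f (aapp g x).
Proof. by rewrite /aapp /= mulmxDr mulmxA addrA. Qed.

Lemma aapp_aid x : aapp (aid R) x = x.
Proof. by rewrite /aapp /= mul1mx add0r. Qed.

Lemma conj_byP phi g h : is_affinity phi ->
  conj_by phi g = h <-> amul phi g = amul h phi.
Proof.
move=> uphi; rewrite /conj_by; split=> [<- | ->].
  by rewrite amulA amul_ainvl // amul_aidr.
by rewrite amulA amul_ainvr // amul_aidr.
Qed.

Lemma ainv_aid : ainv (aid R) = aid R.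
Proof. by apply: aff_eq; rewrite /= invmx1 ?mulmx0 ?oppr0. Qed.

Lemma conj_by_aid g : conj_by (aid R) g = g.
Proof. by rewrite /conj_by ainv_aid amul_aidl amul_aidr. Qed.

Lemma conj_byM phi g h : is_affinity phi ->
  conj_by phi (amul g h) = amul (conj_by phi g) (conj_by phi h).
Proof. by move=> uphi; rewrite /conj_by !amulA amulK. Qed.

Lemma conj_by_amul f g h : is_affinity f -> is_affinity g ->
  conj_by (amul f g) h = conj_by f (conj_by g h).
Proof. by move=> uf ug; rewrite /conj_by ainvM // !amulA. Qed.

Lemma conj_byK phi g : is_affinity phi -> conj_by (ainv phi) (conj_by phi g) = g.
Proof.
move=> uphi; have uphi' := ainv_affinity uphi.
by rewrite -conj_by_amul // amul_ainvl // conj_by_aid.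
Qed.

Lemma conj_byKV phi g : is_affinity phi -> conj_by phi (conj_by (ainv phi) g) = g.
Proof.
move=> uphi; have uphi' := ainv_affinity uphi.
by rewrite -conj_by_amul // amul_ainvr // conj_by_aid.
Qed.

End AffineGroup.

Section Normalizer.
Variables (R : realType) (M : aff R -> Prop).
Implicit Types (g h phi : aff R) (alpha : aff R -> aff R).

Lemma normalizer_aut phi : in_normalizer M phi -> is_aut M (conj_by phi).
Proof.
move=> [uphi Mphi]; split.
- by move=> g /Mphi.
- move=> h Mh; exists (conj_by (ainv phi) h); last exact: conj_byKV.
  by apply/Mphi; rewrite conj_byKV.
- by move=> g h _ _ Egh; rewrite -(conj_byK g uphi) Egh conj_byK.
- by move=> g h _ _; exact: conj_byM.
Qed.

Lemma normalizer_of_aut alpha phi : is_affinity phi -> is_aut M alpha ->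
  (forall g, M g -> conj_by phi g = alpha g) -> in_normalizer M phi.
Proof.
move=> uphi [Malpha alpha_onto _ _] phiE; split=> // g; split=> [Mg | Mphig].
  by rewrite phiE //; exact: Malpha.
have [g' Mg' alphag'] := alpha_onto _ Mphig.
by rewrite -[g](conj_byK _ uphi) -alphag' -phiE // conj_byK.
Qed.

End Normalizer.

Section Generated.
Variables (R : realType) (S : aff R -> Prop).
Hypothesis S_affinity : forall g, S g -> is_affinity g.
Local Notation G := (gen S).
Implicit Types (g h phi chi : aff R) (alpha : aff R -> aff R).

Lemma gen_affinity g : G g -> is_affinity g.
Proof.
elim=> {g} [g /S_affinity | | g h _ ug _ uh | g _ ug] //.
- exact: aid_affinity.
- exact: amul_affinity.
- exact: ainv_affinity.
Qed.

Lemma orbit_aapp h x : G h -> Defs.orbit G (aapp h x) = Defs.orbit G x.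
Proof.
move=> Gh; apply: functional_extensionality => y.
apply: propositional_extensionality; split=> [[g Gg ->] | [g Gg ->]].
  by exists (amul g h); [exact: gen_mul | rewrite aapp_amul].
exists (amul g (ainv h)); first by apply: gen_mul => //; exact: gen_inv.
by rewrite -aapp_amul amulA amul_ainvl ?amul_aidr //; exact: gen_affinity.
Qed.

Lemma aut_aid alpha : is_aut G alpha -> alpha (aid R) = aid R.
Proof.
move=> [Galpha _ _ alphaM]; have G1 := gen_id S.
have u1 := gen_affinity (Galpha _ G1).
have := alphaM _ _ G1 G1; rewrite amul_aidl => idem.
by rewrite -[LHS](amulK _ u1) -idem amul_ainvl.
Qed.

Lemma aut_ainv alpha g : is_aut G alpha -> G g -> alpha (ainv g) = ainv (alpha g).
Proof.
move=> alpha_aut Gg; have [Galpha _ _ alphaM] := alpha_aut.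
apply: ainv_unique; first exact/gen_affinity/Galpha.
rewrite -alphaM ?amul_ainvl ?aut_aid //; [exact: gen_affinity | exact: gen_inv].
Qed.

Lemma aut_intertwine alpha phi : is_aut G alpha ->
  (forall s, S s -> amul phi s = amul (alpha s) phi) ->
  forall g, G g -> amul phi g = amul (alpha g) phi.
Proof.
move=> alpha_aut phiS g; have [Galpha _ _ alphaM] := alpha_aut.
elim=> {g} [s /phiS | | g h Gg phig Gh phih | g Gg phig] //.
- by rewrite (aut_aid alpha_aut) amul_aidl amul_aidr.
- by rewrite alphaM // -amulA phig amulA phih amulA.
- have ug := gen_affinity Gg; have uag := gen_affinity (Galpha _ Gg).
  rewrite (aut_ainv alpha_aut Gg) -[in RHS](amul_aidr phi) -(amul_ainvr ug).
  by rewrite -[amul phi (amul g _)]amulA phig amulA amulK.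
Qed.

Lemma normalizer_outer_amul phi chi : in_normalizer G phi -> G chi ->
  same_outer G (conj_by phi) (conj_by (amul phi chi)).
Proof.
move=> [uphi Gphi] Gchi; have uchi := gen_affinity Gchi.
set h := conj_by phi (ainv chi).
have Gh : G h := proj1 (Gphi _) (gen_inv Gchi).
have hphi : amul h phi = amul phi (ainv chi) by apply/esym/conj_byP.
exists h => // g _.
have uh := gen_affinity Gh.
rewrite -conj_by_amul //; last exact: amul_affinity.
by rewrite -amulA hphi amulA amul_ainvl // amul_aidr.
Qed.

End Generated.

Section Mgrp.
Variable R : realType.
Local Notation M := (@Mgrp R).
Local Notation e := (@e R).
Local Notation half_turn := (mkAff 0 (- 1%:M) : aff R).
Implicit Types (g h phi psi chi : aff R) (alpha : aff R -> aff R).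

Definition is_sign (s : R) := s = 1 \/ s = -1.

Lemma sign_int s : is_sign s -> s \is a Num.int.
Proof. by case=> ->; rewrite ?rpredN rpred1. Qed.

Lemma signM s t : is_sign s -> is_sign t -> is_sign (s * t).
Proof. by case=> ->; case=> ->; rewrite ?mul1r ?mulN1r ?opprK; [left | right | right | left]. Qed.

Lemma signV s : is_sign s -> s^-1 = s.
Proof. by case=> ->; rewrite ?invr1 ?invrN1. Qed.

Lemma sign_norm s : is_sign s -> `|s| = 1.
Proof. by case=> ->; rewrite ?normrN normr1. Qed.

Lemma scalar_mxN1 : (-1)%:M = - 1%:M :> 'M[R]_2.
Proof. exact: raddfN. Qed.

Lemma mx1_neqN1 : 1%:M <> - 1%:M :> 'M[R]_2.
Proof. by move/matrixP/(_ 0 0); rewrite !mxE /=; lra. Qed.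

Lemma e_delta j : e j = delta_mx j 0.
Proof. by apply/matrixP => i k; rewrite ord1 !mxE eqxx andbT. Qed.

Lemma mulmx_e (C : 'M[R]_2) i j : (C *m e j) i 0 = C i j.
Proof. by rewrite e_delta -colE mxE. Qed.

Definition int_vec (v : 'cV[R]_2) := forall i, v i 0 \is a Num.int.

Lemma int_vec0 : int_vec 0.
Proof. by move=> i; rewrite mxE rpred0. Qed.

Lemma int_vec_e j : int_vec (e j).
Proof. by move=> i; rewrite mxE natr_int. Qed.

Lemma int_vecD u v : int_vec u -> int_vec v -> int_vec (u + v).
Proof. by move=> uZ vZ i; rewrite !mxE rpredD. Qed.

Lemma int_vecN v : int_vec v -> int_vec (- v).
Proof. by move=> vZ i; rewrite !mxE rpredN. Qed.

Lemma int_vec_signZ s v : is_sign s -> int_vec v -> int_vec (s *: v).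
Proof. by move=> s_sign vZ i; rewrite mxE rpredM // sign_int. Qed.

Definition int_sign_map g : Prop :=
  (exists2 s, is_sign s & alin g = s%:M) /\ int_vec (atr g).

Lemma Mgrp_int_sign_map g : M g -> int_sign_map g.
Proof.
elim=> {g} [g [|[|]] -> | | g h _ [[s s_sign gs] gZ] _ [[t t_sign ht] hZ]
            | g _ [[s s_sign gs] gZ]].
- by split; [exists 1; [left | ] | exact: int_vec_e].
- by split; [exists 1; [left | ] | exact: int_vec_e].
- by split; [exists (-1); [right | rewrite scalar_mxN1] | exact: int_vec0].
- by split; [exists 1; [left | ] | exact: int_vec0].
- split; first by exists (s * t); [exact: signM | rewrite /= gs ht scalar_mxM].
  by rewrite /= gs mul_scalar_mx; apply/int_vecD/int_vec_signZ.
- split; first by exists s => //; rewrite /= gs invmx_scalar signV.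
  by rewrite /= gs invmx_scalar signV // mul_scalar_mx; apply/int_vecN/int_vec_signZ.
Qed.

Lemma Mgrp_gen_affinity g :
  g = transl (e 0) \/ g = transl (e 1) \/ g = half_turn -> is_affinity g.
Proof.
case=> [|[|]] ->; rewrite /is_affinity /= ?unitmx1 //.
by rewrite -scaleN1r unitmxZ ?unitrN1 ?unitmx1.
Qed.

Lemma Mgrp_affinity g : M g -> is_affinity g.
Proof. exact/gen_affinity/Mgrp_gen_affinity. Qed.

Lemma Mgrp_transl_e j : M (transl (e j)).
Proof. by apply: gen_base; case: (ord2P j) => ->; [left | right; left]. Qed.

Lemma Mgrp_half_turn : M half_turn.
Proof. by apply: gen_base; right; right. Qed.

Lemma Mgrp_scalar s : is_sign s -> M (mkAff 0 s%:M).
Proof.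
by case=> ->; [exact: gen_id | rewrite scalar_mxN1; exact: Mgrp_half_turn].
Qed.

Lemma Mgrp_set_alin g s : M g -> is_sign s -> M (mkAff (atr g) s%:M).
Proof.
move=> Mg s_sign; have [[t t_sign gt] _] := Mgrp_int_sign_map Mg.
have -> : mkAff (atr g) s%:M = amul g (mkAff 0 (t * s)%:M).
  apply: aff_eq; rewrite /= ?mulmx0 ?addr0 // gt -scalar_mxM mulrA.
  by case: t_sign => ->; rewrite ?mulN1r ?opprK !mul1r.
exact/(gen_mul Mg)/Mgrp_scalar/signM.
Qed.

Lemma orbitwise_eigen c (C : 'M[R]_2) : int_vec c ->
  (forall x, Defs.orbit M x (c + C *m x)) ->
  forall v : 'cV[R]_2, exists2 s, is_sign s & C *m v = s *: v.
Proof.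
move=> cZ orbC v; set w := C *m v.
pose S : R := \sum_j (`|w j 0| + `|v j 0|).
have wv_le i : `|w i 0| + `|v i 0| <= S.
  by rewrite /S (bigD1 i) //= lerDl sumr_ge0 // => j _; rewrite addr_ge0.
have S_ge0 : 0 <= S by apply: le_trans (wv_le 0); rewrite addr_ge0.
(* At x = v / K the integral vector atr g - c is (w - s v) / K, whose entries
   have norm < 1. *)
pose K : R := 1 + S.
have K_gt0 : 0 < K by rewrite /K; lra.
have [g Mg gE] := orbC (K^-1 *: v).
have [[s s_sign gs] gZ] := Mgrp_int_sign_map Mg.
exists s => //.
have dZ : int_vec (K^-1 *: (w - s *: v)).
  have gE' : atr g = c + (K^-1 *: w - s *: (K^-1 *: v)).
    by rewrite /w scalemxAr addrA gE /aapp gs mul_scalar_mx addrK.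
  have -> : K^-1 *: (w - s *: v) = atr g - c.
    by rewrite gE' [RHS]addrC addKr scalerBr !scalerA mulrC.
  exact: int_vecD gZ (int_vecN cZ).
apply/matrixP => i j; rewrite ord1 {j}.
have d_small : `|K^-1 * (w i 0 - s * v i 0)| < 1.
  rewrite normrM gtr0_norm ?invr_gt0 // mulrC ltr_pdivrMr //.
  apply: le_lt_trans (ler_normB _ _) _; rewrite normrM (sign_norm s_sign).
  by have := wv_le i; rewrite /K; lra.
have := intr_norm_lt1 _ d_small; move: (dZ i); rewrite !mxE => dZi /(_ dZi) /eqP.
by rewrite mulf_eq0 invr_eq0 gt_eqF //= subr_eq0 => /eqP.
Qed.

Lemma eigen_scalar (C : 'M[R]_2) a b c : C *m e 0 = a *: e 0 -> C *m e 1 = b *: e 1 ->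
  C *m (e 0 + e 1) = c *: (e 0 + e 1) -> C = a%:M.
Proof.
move=> Ca Cb; rewrite mulmxDr Ca Cb => /matrixP Cc.
have := Cc 0 0; have := Cc 1 0; rewrite !mxE /= => bc ac.
have Ce j : C *m e j = a *: e j.
  by case: (ord2P j) => ->; rewrite ?Ca // Cb; congr (_ *: _); lra.
by apply/matrixP => i j; rewrite -mulmx_e Ce !mxE mulr_natr.
Qed.

Lemma Mgrp_of_orbitwise chi : (forall x, Defs.orbit M x (aapp chi x)) -> M chi.
Proof.
move=> orb_chi; have [g0 Mg0 g0E] := orb_chi 0.
rewrite /aapp !mulmx0 !addr0 in g0E.
have [_ g0Z] := Mgrp_int_sign_map Mg0.
have eigen := @orbitwise_eigen (atr chi) (alin chi) ltac:(by rewrite g0E) orb_chi.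
have [s s_sign Cs] := eigen (e 0); have [t _ Ct] := eigen (e 1).
have [u _ Cu] := eigen (e 0 + e 1).
have -> : chi = mkAff (atr g0) s%:M by apply: aff_eq => //; exact: eigen_scalar Cs Ct Cu.
exact: Mgrp_set_alin.
Qed.

Lemma Mgrp_centralizer chi : (forall g, M g -> amul chi g = amul g chi) -> chi = aid R.
Proof.
case: chi => c C comm.
have Ce j : C *m e j = e j.
  have := congr1 (@atr R) (comm _ (Mgrp_transl_e j)).
  by rewrite /= mul1mx [RHS]addrC => /addrI.
have c0 : c = 0.
  have := congr1 (@atr R) (comm _ Mgrp_half_turn).
  rewrite /= mulmx0 addr0 add0r mulNmx mul1mx => /matrixP cE.
  by apply/matrixP => i j; have := cE i j; rewrite !mxE; lra.
have C1 : C = 1%:M by apply/matrixP => i j; rewrite -mulmx_e Ce !mxE.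
by apply: aff_eq; rewrite /= ?c0 ?C1.
Qed.

Lemma Mgrp_alin g : M g -> alin g = 1%:M \/ alin g = - 1%:M.
Proof. by move=> /Mgrp_int_sign_map[[s [] -> ->] _]; [left | right; rewrite scalar_mxN1]. Qed.

Lemma Mgrp_half_turnP g : M g -> (alin g = - 1%:M <-> amul g g = aid R /\ g <> aid R).
Proof.
move=> Mg; split=> [gN | [gg1 g_ne1]].
  split=> [| g1]; first by apply: aff_eq; rewrite /= gN mulNmx mul1mx ?subrr ?opprK.
  by apply: mx1_neqN1; rewrite -gN g1.
case: (Mgrp_alin Mg) => // g1; case: g_ne1; apply: aff_eq => //.
have := congr1 (@atr R) gg1; rewrite /= g1 mul1mx => /matrixP g2.
by apply/matrixP => i j; have := g2 i j; rewrite !mxE; lra.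
Qed.

Lemma Mgrp_aut_alin alpha g : is_aut M alpha -> M g -> alin (alpha g) = alin g.
Proof.
move=> alpha_aut Mg; have [Malpha _ alpha_inj alphaM] := alpha_aut.
have Mag := Malpha _ Mg; have M1 : M (aid R) := gen_id _.
have alpha1 := aut_aid Mgrp_gen_affinity alpha_aut.
have half_iff : alin g = - 1%:M <-> alin (alpha g) = - 1%:M.
  split=> [/(Mgrp_half_turnP Mg)[gg g1] | /(Mgrp_half_turnP Mag)[aa a1]];
    [apply/(Mgrp_half_turnP Mag) | apply/(Mgrp_half_turnP Mg)]; split.
  - by rewrite -alphaM // gg alpha1.
  - by move=> ag1; apply: g1; apply: alpha_inj => //; rewrite ag1 alpha1.
  - by apply: alpha_inj; rewrite ?alphaM ?aa ?alpha1 //; exact: gen_mul.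
  - by move=> g1; apply: a1; rewrite g1.
by case: (Mgrp_alin Mg) (Mgrp_alin Mag) half_iff => -> [] -> // [gN aN];
  [exact/esym/aN | exact: gN].
Qed.

Lemma Mgrp_aut_conj alpha : is_aut M alpha ->
  exists2 phi, in_normalizer M phi & forall g, M g -> conj_by phi g = alpha g.
Proof.
move=> alpha_aut; have [_ alpha_onto _ _] := alpha_aut.
pose A : 'M[R]_2 := \matrix_(i, j) atr (alpha (transl (e j))) i 0.
pose b := atr (alpha half_turn).
pose phi := mkAff (2^-1 *: b) A.
have alpha_transl j : alpha (transl (e j)) = transl (A *m e j).
  apply: aff_eq; last exact: Mgrp_aut_alin alpha_aut (Mgrp_transl_e j).
  by apply/matrixP => i k; rewrite ord1 mulmx_e mxE.
have alpha_half : alpha half_turn = mkAff b (- 1%:M).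
  by apply: aff_eq; last exact: Mgrp_aut_alin alpha_aut Mgrp_half_turn.
have phiE : forall g, M g -> amul phi g = amul (alpha g) phi.
  apply: (aut_intertwine Mgrp_gen_affinity alpha_aut) => s [|[|]] ->.
  - by rewrite alpha_transl; apply: aff_eq; rewrite /= ?mulmx1 ?mul1mx // addrC.
  - by rewrite alpha_transl; apply: aff_eq; rewrite /= ?mulmx1 ?mul1mx // addrC.
  - rewrite alpha_half; apply: aff_eq; rewrite /= ?mulmxN ?mulNmx ?mulmx1 ?mul1mx //.
    by rewrite mulmx0 addr0; apply/matrixP => i j; rewrite !mxE; lra.
have uA : A \in unitmx.
  apply: unitmx_of_delta_preimages => j.
  have [g Mg gE] := alpha_onto _ (Mgrp_transl_e j).
  exists (atr g); rewrite -e_delta.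
  by have := congr1 (@atr R) (phiE g Mg); rewrite gE /= mul1mx addrC => /addIr.
have uphi : is_affinity phi := uA.
have conjE g : M g -> conj_by phi g = alpha g by move=> Mg; apply/conj_byP/phiE.
by exists phi => //; exact: normalizer_of_aut uphi alpha_aut conjE.
Qed.

Lemma same_induced_Mgrp phi psi : in_normalizer M phi ->
  same_induced M phi psi -> M (amul (ainv phi) psi).
Proof.
move=> [uphi Mphi] phi_psi; apply: Mgrp_of_orbitwise => x.
have : Defs.orbit M (aapp psi x) (aapp psi x) by exists (aid R); [exact: gen_id | rewrite aapp_aid].
rewrite -phi_psi => -[g Mg psixE].
exists (conj_by (ainv phi) g); first by apply/Mphi; rewrite conj_byKV.
by rewrite /conj_by ainvK // !aapp_amul psixE.
Qed.

Lemma same_outer_induced phi psi : in_normalizer M phi -> in_normalizer M psi ->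
  same_outer M (conj_by phi) (conj_by psi) -> same_induced M phi psi.
Proof.
move=> [uphi _] [upsi _] [h Mh hE]; have uh := Mgrp_affinity Mh.
have uhpsi := amul_affinity uh upsi.
suff -> : phi = amul h psi by move=> x; rewrite aapp_amul orbit_aapp //; exact: Mgrp_gen_affinity.
have chi1 : amul (ainv (amul h psi)) phi = aid R.
  have uhpsi' := ainv_affinity uhpsi.
  apply: Mgrp_centralizer => g Mg; apply/conj_byP; first exact: amul_affinity.
  by rewrite conj_by_amul // hE // -(conj_by_amul _ uh upsi) conj_byK.
by rewrite -[phi](amulKV _ uhpsi) chi1 amul_aidr.
Qed.

Lemma same_induced_outer phi psi : in_normalizer M phi ->
  same_induced M phi psi -> same_outer M (conj_by phi) (conj_by psi).
Proof.
move=> Nphi phi_psi; rewrite -[psi](amulKV _ Nphi.1).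
exact: normalizer_outer_amul Mgrp_gen_affinity _ _ Nphi (same_induced_Mgrp Nphi phi_psi).
Qed.

End Mgrp.

Theorem lemma19 (R : realType) :
  let M := @Mgrp R in
  (* Omega takes values in Out(M) *)
  (forall phi, in_normalizer M phi -> is_aut M (conj_by phi)) /\
  (* well-defined on affinities of the orbifold *)
  (forall phi psi, in_normalizer M phi -> in_normalizer M psi ->
     same_induced M phi psi -> same_outer M (conj_by phi) (conj_by psi)) /\
  (* homomorphism: (phi psi)_* = phi_* psi_* is sent to the composite *)
  (forall phi psi, in_normalizer M phi -> in_normalizer M psi ->
     forall g, M g -> conj_by (amul phi psi) g = conj_by phi (conj_by psi g)) /\
  (* injective *)
  (forall phi psi, in_normalizer M phi -> in_normalizer M psi ->
     same_outer M (conj_by phi) (conj_by psi) -> same_induced M phi psi) /\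
  (* surjective *)
  (forall alpha, is_aut M alpha ->
     exists2 phi, in_normalizer M phi & same_outer M (conj_by phi) alpha).
Proof.
move=> M; split; first exact: normalizer_aut.
split; first by move=> phi psi Nphi _; exact: same_induced_outer.
split; first by move=> phi psi [uphi _] [upsi _] g _; exact: conj_by_amul.
split; first exact: same_outer_induced.
move=> alpha /Mgrp_aut_conj[phi Nphi phiE].
by exists phi => //; exists (aid R) => [|g Mg]; [exact: gen_id | rewrite conj_by_aid phiE].
Qed.
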